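(* Let $S$ be an abundant semigroup and let $S^0$ be an adequate transversal of $S$. Let $R=\{x\in S: e_x=e_{\bar x}\}$ and $L=\{x\in S: f_x=f_{\bar x}\}$. Then $S^0$ is a quasi-ideal of $S$ (i.e. $S^0SS^0\subseteq S^0$) if and only if $RL\subseteq S^0$.
   Context: For a semigroup $S$, $\mathcal{R}^\ast=\{(a,b)\in S\times S: \text{for all } x,y\in S^1,\ xa=ya \iff xb=yb\}$ and $\mathcal{L}^\ast$ is defined dually. $S$ is abundant if every $\mathcal{R}^\ast$-class and every $\mathcal{L}^\ast$-class contains an idempotent; adequate if it is abundant and its idempotents commute. In an adequate semigroup $a^+$ and $a^\ast$ denote the unique idempotents in the $\mathcal{R}^\ast$-class and $\mathcal{L}^\ast$-class of $a$. A subsemigroup $U$ of an abundant semigroup $S$ is a $\ast$-subsemigroup if $U$ is abundant and $\mathcal{L}^\ast_U=\mathcal{L}^\ast_S\cap(U\times U)$, $\mathcal{R}^\ast_U=\mathcal{R}^\ast_S\cap(U\times U)$. An adequate $\ast$-subsemigroup $S^0$ of an abundant semigroup $S$ is an adequate transversal of $S$ if for each $x\in S$ there is a unique $\bar x\in S^0$ and idempotents $e,f$ of $S$ with $x=e\bar x f$, $e\,\mathcal{L}\,\bar x^+$ and $f\,\mathcal{R}\,\bar x^\ast$ ($\mathcal{L},\mathcal{R}$ Green's relations); such $e,f$ are then uniquely determined by $x$ and are denoted $e_x$, $f_x$. *)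

Section Semigroup.
Variable T : Type.
Variable mul : T -> T -> T.

(* elements of S^1 are represented by option T, None being the adjoined 1 *)
Definition lmul1 (x : option T) (a : T) : T :=
  match x with Some u => mul u a | None => a end.
Definition rmul1 (a : T) (x : option T) : T :=
  match x with Some u => mul a u | None => a end.

Definition in1 (U : T -> Prop) (x : option T) : Prop :=
  match x with Some u => U u | None => True end.

Definition idem (e : T) : Prop := mul e e = e.

Definition RstarIn (U : T -> Prop) (a b : T) : Prop :=
  forall x y : option T, in1 U x -> in1 U y ->
    (lmul1 x a = lmul1 y a <-> lmul1 x b = lmul1 y b).
Definition LstarIn (U : T -> Prop) (a b : T) : Prop :=
  forall x y : option T, in1 U x -> in1 U y ->
    (rmul1 a x = rmul1 a y <-> rmul1 b x = rmul1 b y).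

Definition SetT : T -> Prop := fun _ => True.
Definition Rstar := RstarIn SetT.
Definition Lstar := LstarIn SetT.

Definition GreenL (a b : T) : Prop :=
  (exists u : option T, a = lmul1 u b) /\ (exists v : option T, b = lmul1 v a).
Definition GreenR (a b : T) : Prop :=
  (exists u : option T, a = rmul1 b u) /\ (exists v : option T, b = rmul1 a v).

Definition closed (U : T -> Prop) : Prop :=
  forall a b, U a -> U b -> U (mul a b).

Definition abundantIn (U : T -> Prop) : Prop :=
  forall a, U a ->
    (exists e, U e /\ idem e /\ RstarIn U a e) /\
    (exists e, U e /\ idem e /\ LstarIn U a e).

Definition abundant : Prop := abundantIn SetT.

Definition adequateIn (U : T -> Prop) : Prop :=
  abundantIn U /\
  forall e f, U e -> U f -> idem e -> idem f -> mul e f = mul f e.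

Definition star_subsemigroup (U : T -> Prop) : Prop :=
  closed U /\ abundantIn U /\
  (forall a b, U a -> U b -> (LstarIn U a b <-> Lstar a b)) /\
  (forall a b, U a -> U b -> (RstarIn U a b <-> Rstar a b)).

Definition isPlus (U : T -> Prop) (a p : T) : Prop :=
  U p /\ idem p /\ RstarIn U a p.
Definition isStar (U : T -> Prop) (a p : T) : Prop :=
  U p /\ idem p /\ LstarIn U a p.

Definition decomp (U : T -> Prop) (x xb e f : T) : Prop :=
  U xb /\ idem e /\ idem f /\ x = mul (mul e xb) f /\
  (exists p, isPlus U xb p /\ GreenL e p) /\
  (exists s, isStar U xb s /\ GreenR f s).

Definition adequate_transversal (S0 : T -> Prop) : Prop :=
  star_subsemigroup S0 /\ adequateIn S0 /\
  forall x, exists xb, (S0 xb /\ exists e f, decomp S0 x xb e f) /\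
    forall xb', (S0 xb' /\ exists e f, decomp S0 x xb' e f) -> xb' = xb.

(* e = e_x, f = f_x (determined uniquely by x, as recalled in the paper) *)
Definition is_ex (S0 : T -> Prop) (x e : T) : Prop :=
  exists xb f, decomp S0 x xb e f.
Definition is_fx (S0 : T -> Prop) (x f : T) : Prop :=
  exists xb e, decomp S0 x xb e f.

(* R = {x : e_x = e_{xbar}},  L = {x : f_x = f_{xbar}} *)
Definition setR (S0 : T -> Prop) (x : T) : Prop :=
  exists xb e f, decomp S0 x xb e f /\ is_ex S0 xb e.
Definition setL (S0 : T -> Prop) (x : T) : Prop :=
  exists xb e f, decomp S0 x xb e f /\ is_fx S0 xb f.

Definition quasi_ideal (S0 : T -> Prop) : Prop :=
  forall a s b, S0 a -> S0 b -> S0 (mul (mul a s) b).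

End Semigroup.


(* If r = e xb f with e = e_xb, then e xb = xb, so r = xb f; dually l = e' yb
   when l lies in L.  Hence r l = xb (f e') yb, which lies in S0 when S0 is a
   quasi-ideal.  Conversely, write s = e sb f with sb in S0; the idempotents e
   and f lie in L and R respectively, while every element of S0 lies in both,
   so a s b = (a e) sb (f b) is a product of three elements of S0. *)

Section Transversal.
Variable T : Type.
Variable mul : T -> T -> T.
Hypothesis mulA : forall a b c, mul a (mul b c) = mul (mul a b) c.
Variable S0 : T -> Prop.

Lemma GreenL_refl a : GreenL T mul a a.
Proof. split; exists None; reflexivity. Qed.

Lemma GreenR_refl a : GreenR T mul a a.
Proof. split; exists None; reflexivity. Qed.

Lemma isPlus_idem p : S0 p -> idem T mul p -> isPlus T mul S0 p p.
Proof. repeat split; tauto. Qed.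

Lemma isStar_idem p : S0 p -> idem T mul p -> isStar T mul S0 p p.
Proof. repeat split; tauto. Qed.

Lemma GreenL_idem_mulr e p : idem T mul p -> GreenL T mul e p -> mul e p = e.
Proof.
  intros Ip [[[u|] ->] _]; simpl; [now rewrite <- mulA, Ip | exact Ip].
Qed.

Lemma GreenR_idem_mull f q : idem T mul q -> GreenR T mul f q -> mul q f = f.
Proof.
  intros Iq [[[u|] ->] _]; simpl; [now rewrite mulA, Iq | exact Iq].
Qed.

Lemma decomp_mull x xb e f : decomp T mul S0 x xb e f -> mul e x = x.
Proof.
  intros (_ & Ie & _ & -> & _). now rewrite !mulA, Ie.
Qed.

Lemma decomp_mulr x xb e f : decomp T mul S0 x xb e f -> mul x f = x.
Proof.
  intros (_ & _ & If & -> & _). now rewrite <- mulA, If.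
Qed.

Lemma decomp_idem_GreenL p e :
  S0 p -> idem T mul p -> idem T mul e -> GreenL T mul e p ->
  decomp T mul S0 e p e p.
Proof.
  intros Sp Ip Ie GL. repeat split; auto.
  - now rewrite !(GreenL_idem_mulr e p Ip GL).
  - exists p. auto using isPlus_idem.
  - exists p. auto using isStar_idem, GreenR_refl.
Qed.

Lemma decomp_idem_GreenR q f :
  S0 q -> idem T mul q -> idem T mul f -> GreenR T mul f q ->
  decomp T mul S0 f q q f.
Proof.
  intros Sq Iq If GR. repeat split; auto.
  - now rewrite Iq, (GreenR_idem_mull f q Iq GR).
  - exists q. auto using isPlus_idem, GreenL_refl.
  - exists q. auto using isStar_idem.
Qed.

Lemma decomp_idem p : S0 p -> idem T mul p -> decomp T mul S0 p p p p.
Proof. intros Sp Ip. apply decomp_idem_GreenL; auto using GreenL_refl. Qed.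

Lemma decomp_abundant a :
  abundantIn T mul S0 -> S0 a -> exists p q, decomp T mul S0 a a p q.
Proof.
  intros Hab Sa.
  destruct (Hab a Sa) as [(p & Sp & Ip & Rp) (q & Sq & Iq & Lq)].
  assert (Epa : mul p a = a) by exact (proj2 (Rp (Some p) None Sp I) Ip).
  assert (Eaq : mul a q = a) by exact (proj2 (Lq (Some q) None Sq I) Iq).
  exists p, q. repeat split; auto.
  - now rewrite Epa, Eaq.
  - exists p. split; [exact (conj Sp (conj Ip Rp)) | apply GreenL_refl].
  - exists q. split; [exact (conj Sq (conj Iq Lq)) | apply GreenR_refl].
Qed.

Lemma setR_abundant a : abundantIn T mul S0 -> S0 a -> setR T mul S0 a.
Proof.
  intros Hab Sa. destruct (decomp_abundant a Hab Sa) as (p & q & D).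
  exists a, p, q. split; [exact D | exists a, q; exact D].
Qed.

Lemma setL_abundant a : abundantIn T mul S0 -> S0 a -> setL T mul S0 a.
Proof.
  intros Hab Sa. destruct (decomp_abundant a Hab Sa) as (p & q & D).
  exists a, p, q. split; [exact D | exists a, p; exact D].
Qed.

Lemma setR_factor r : setR T mul S0 r -> exists xb f, S0 xb /\ r = mul xb f.
Proof.
  intros (xb & e & f & D & xb' & f' & Dxb).
  exists xb, f. split; [exact (proj1 D) |].
  destruct D as (_ & _ & _ & -> & _). now rewrite (decomp_mull _ _ _ _ Dxb).
Qed.

Lemma setL_factor l : setL T mul S0 l -> exists yb e, S0 yb /\ l = mul e yb.
Proof.
  intros (yb & e & f & D & yb' & e' & Dyb).
  exists yb, e. split; [exact (proj1 D) |].
  destruct D as (_ & _ & _ & -> & _). now rewrite <- mulA, (decomp_mulr _ _ _ _ Dyb).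
Qed.

Lemma decomp_setL_ex x xb e f : decomp T mul S0 x xb e f -> setL T mul S0 e.
Proof.
  intros (_ & Ie & _ & _ & (p & (Sp & Ip & _) & GL) & _).
  exists p, e, p. split; [now apply decomp_idem_GreenL |].
  exists p, p. now apply decomp_idem.
Qed.

Lemma decomp_setR_fx x xb e f : decomp T mul S0 x xb e f -> setR T mul S0 f.
Proof.
  intros (_ & _ & If & _ & _ & (q & (Sq & Iq & _) & GR)).
  exists q, q, f. split; [now apply decomp_idem_GreenR |].
  exists q, q. now apply decomp_idem.
Qed.

End Transversal.

Theorem lemma1p4 (T : Type) (mul : T -> T -> T)
  (mulA : forall a b c, mul a (mul b c) = mul (mul a b) c)
  (HS : abundant T mul) (S0 : T -> Prop)
  (HS0 : adequate_transversal T mul S0) :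
  quasi_ideal T mul S0 <->
  (forall r l, setR T mul S0 r -> setL T mul S0 l -> S0 (mul r l)).
Proof.
  destruct HS0 as [[Hcl _] [[Hab _] Htr]].
  split.
  - intros Hq r l Hr Hl.
    destruct (setR_factor T mul mulA S0 r Hr) as (xb & f & Sxb & ->).
    destruct (setL_factor T mul mulA S0 l Hl) as (yb & e & Syb & ->).
    replace (mul (mul xb f) (mul e yb)) with (mul (mul xb (mul f e)) yb)
      by now rewrite !mulA.
    now apply Hq.
  - intros HRL a s b Sa Sb.
    destruct (Htr s) as (sb & (Ssb & e & f & D) & _).
    pose proof (HRL a e (setR_abundant T mul S0 a Hab Sa)
                  (decomp_setL_ex T mul mulA S0 _ _ _ _ D)) as Sae.
    pose proof (HRL f b (decomp_setR_fx T mul mulA S0 _ _ _ _ D)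
                  (setL_abundant T mul S0 b Hab Sb)) as Sfb.
    destruct D as (_ & _ & _ & -> & _).
    replace (mul (mul a (mul (mul e sb) f)) b)
      with (mul (mul (mul a e) sb) (mul f b)) by now rewrite !mulA.
    auto.
Qed.
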